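(* Let $k$ be a field of characteristic $\neq 2$ and let $\mathcal O=v_0k[t]\oplus v_1k[t]\oplus v_2k[t]$ be the Lie algebra described in the context. Then: (i) $\mathcal O$ is generated, as a Lie algebra over $k$, by $v_0,v_1,v_2$; (ii) the centroid of $\mathcal O$ is isomorphic to $k[t]$ (every element of the centroid is the multiplication by some polynomial $p(t)\in k[t]$); (iii) $\mathcal O$ is prime.
   Context: $\mathcal O$ is the Lie algebra over $k$ which is a free $k[t]$-module with basis $v_0,v_1,v_2$, whose bracket is $k[t]$-bilinear and determined by $[v_0,v_1]=-v_2(t-1)$, $[v_1,v_2]=-v_0$, $[v_2,v_0]=v_1t$. (Concretely, in $\mathfrak{sl}_2(k)\otimes k[t,t^{-1},(1-t)^{-1}]$ it is the subalgebra $u_0(t-1)k[t]\oplus u_1k[t]\oplus u_2tk[t]$ with $v_0=u_0(t-1)$, $v_1=u_1$, $v_2=u_2t$, and it is isomorphic to the Onsager algebra, the Lie algebra with generators $A,B$ and relations $[A,[A,[A,B]]]=4[A,B]$, $[B,[B,[B,A]]]=4[B,A]$.) The centroid of a Lie algebra $L$ over $k$ is $\{f\in\mathrm{End}_k(L): f([x,y])=[x,f(y)]\ \forall x,y\in L\}$. A Lie algebra is prime if the bracket of two nonzero ideals is never zero. *)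

From mathcomp Require Import all_boot all_algebra.
Set Implicit Arguments.
Unset Strict Implicit.
Unset Printing Implicit Defensive.
Import GRing.Theory.
Local Open Scope ring_scope.

(* The Onsager algebra O = v0 k[t] (+) v1 k[t] (+) v2 k[t], a free k[t]-module
   of rank 3; an element a0 v0 + a1 v1 + a2 v2 is represented by the triple
   ((a0, a1), a2) of polynomials. *)
Notation Onsager k := ({poly k} * {poly k} * {poly k})%type.

Section Onsager.
Variable k : fieldType.

Definition v0 : Onsager k := (1, 0, 0).
Definition v1 : Onsager k := (0, 1, 0).
Definition v2 : Onsager k := (0, 0, 1).

(* k[t]-bilinear bracket determined by
   [v0,v1] = -v2 (t-1), [v1,v2] = -v0, [v2,v0] = v1 t. *)
Definition Obr (x y : Onsager k) : Onsager k :=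
  let a0 := x.1.1 in let a1 := x.1.2 in let a2 := x.2 in
  let b0 := y.1.1 in let b1 := y.1.2 in let b2 := y.2 in
  (- (a1 * b2 - a2 * b1),
   'X * (a2 * b0 - a0 * b2),
   - ('X - 1) * (a0 * b1 - a1 * b0)).

Definition Opmul (p : {poly k}) (x : Onsager k) : Onsager k :=
  (p * x.1.1, p * x.1.2, p * x.2).

Definition is_subalgebra (S : Onsager k -> Prop) : Prop :=
  [/\ S 0, (forall x y, S x -> S y -> S (x + y)),
      (forall (c : k) x, S x -> S (c *: x)) &
      (forall x y, S x -> S y -> S (Obr x y))].

Definition generates (X : Onsager k -> Prop) : Prop :=
  forall S, is_subalgebra S -> (forall x, X x -> S x) -> forall x, S x.

Definition is_ideal (I : Onsager k -> Prop) : Prop :=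
  [/\ I 0, (forall x y, I x -> I y -> I (x + y)),
      (forall (c : k) x, I x -> I (c *: x)) &
      (forall x y, I y -> I (Obr x y))].

Definition in_centroid (f : Onsager k -> Onsager k) : Prop :=
  [/\ (forall x y, f (x + y) = f x + f y),
      (forall (c : k) x, f (c *: x) = c *: f x) &
      (forall x y, f (Obr x y) = Obr x (f y))].

(* prime: the bracket [I,J] (k-span of all [a,b], a in I, b in J) of two
   nonzero ideals is never zero *)
Definition is_prime : Prop :=
  forall I J, is_ideal I -> is_ideal J ->
    (exists a, I a /\ a <> 0) -> (exists b, J b /\ b <> 0) ->
    exists a b, [/\ I a, J b & Obr a b <> 0].

End Onsager.

(* The maps x |-> -[x, v2] and x |-> [x, v0] send p v0 to p t v1, p v1 to
   p v0, and p v1 to p (t - 1) v2, so by induction on p a subalgebra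
   containing v0, v1, v2 contains every p v_i.  An element f of the centroid
   satisfies [x, f x] = f [x, x] = 0; the centralizer of v_i is v_i k[t], so
   f v_i = p_i v_i, and computing f v0 = f [v2, v1] through either argument
   gives p_0 = p_1 = p_2.  The set where two centroid elements agree is a
   subalgebra, so f is multiplication by p_0.  Finally, bracketing with v0
   and v1 pushes any nonzero element of an ideal to a nonzero element of
   v2 k[t], and [[v0, r v2], s v2] = t r s v0. *)
From mathcomp Require Import all_boot all_algebra.
From mathcomp Require Import ring.

Set Implicit Arguments.
Unset Strict Implicit.
Unset Printing Implicit Defensive.
Import GRing.Theory.
Local Open Scope ring_scope.

Section Onsager.
Variable k : fieldType.

Lemma scale_triple (c : k) (a b d : {poly k}) :
  c *: ((a, b, d) : Onsager k) = (c%:P * a, c%:P * b, c%:P * d).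
Proof. by rewrite /GRing.scale /= !mul_polyC. Qed.

Lemma add_triple (a b d a' b' d' : {poly k}) :
  ((a, b, d) : Onsager k) + (a', b', d') = (a + a', b + b', d + d').
Proof. by []. Qed.

Lemma opp_triple (a b d : {poly k}) : - ((a, b, d) : Onsager k) = (-a, -b, -d).
Proof. by []. Qed.

Ltac triple_ring :=
  rewrite ?scale_triple ?add_triple ?opp_triple /Obr /Opmul /v0 /v1 /v2 /=;
  rewrite ?polyCN ?polyC1; congr (_, _, _); ring.

Lemma polyX_neq0 : ('X : {poly k}) != 0.
Proof. by rewrite polyX_eq0. Qed.

Lemma polyXsub1_neq0 : ('X - 1 : {poly k}) != 0.
Proof. by rewrite -polyC1 polyXsubC_eq0. Qed.

Lemma Obr_anti (x y : Onsager k) : Obr x y = - Obr y x.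
Proof. by case: x y => [[? ?] ?] [[? ?] ?]; triple_ring. Qed.

Lemma Obr_self (x : Onsager k) : Obr x x = 0.
Proof. by case: x => [[? ?] ?]; triple_ring. Qed.

Section Generation.
Variable S : Onsager k -> Prop.
Hypothesis subS : is_subalgebra S.
Hypotheses (S_v0 : S (v0 k)) (S_v1 : S (v1 k)) (S_v2 : S (v2 k)).

Definition contains_v_multiples (p : {poly k}) : Prop :=
  [/\ S (p, 0, 0), S (0, p, 0) & S (0, 0, p)].

Lemma contains_v_multiplesC (c : k) : contains_v_multiples c%:P.
Proof.
have [_ _ SZ _] := subS.
split.
- by rewrite (_ : (c%:P, 0, 0) = c *: v0 k); [exact: SZ | triple_ring].
- by rewrite (_ : (0, c%:P, 0) = c *: v1 k); [exact: SZ | triple_ring].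
- by rewrite (_ : (0, 0, c%:P) = c *: v2 k); [exact: SZ | triple_ring].
Qed.

Lemma contains_v_multiplesD p q :
  contains_v_multiples p -> contains_v_multiples q ->
  contains_v_multiples (p + q).
Proof.
have [_ SD _ _] := subS.
move=> [p0 p1 p2] [q0 q1 q2]; split.
- rewrite (_ : (p + q, 0, 0) = (p, 0, 0) + (q, 0, 0)) //; last by triple_ring.
  exact: SD.
- rewrite (_ : (0, p + q, 0) = (0, p, 0) + (0, q, 0)) //; last by triple_ring.
  exact: SD.
- rewrite (_ : (0, 0, p + q) = (0, 0, p) + (0, 0, q)) //; last by triple_ring.
  exact: SD.
Qed.

Lemma contains_v_multiplesMX p :
  contains_v_multiples p -> contains_v_multiples (p * 'X).
Proof.
have [_ SD SZ SB] := subS.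
move=> [p0 p1 p2].
have pX1 : S (0, p * 'X, 0).
  have -> : (0, p * 'X, 0) = (-1) *: Obr (p, 0, 0) (v2 k) by triple_ring.
  by apply/SZ/SB.
split=> //.
- have -> : (p * 'X, 0, 0) = (-1) *: Obr (0, p * 'X, 0) (v2 k) by triple_ring.
  by apply/SZ/SB.
- have -> : (0, 0, p * 'X) = Obr (0, p, 0) (v0 k) + (0, 0, p) by triple_ring.
  by apply: SD => //; apply: SB.
Qed.

Lemma contains_all_v_multiples p : contains_v_multiples p.
Proof.
elim/poly_ind: p => [|p c Hp]; first exact: (contains_v_multiplesC 0).
exact/contains_v_multiplesD/contains_v_multiplesC/contains_v_multiplesMX.
Qed.

End Generation.

Lemma generates_v012 :
  generates (fun x : Onsager k => x = v0 k \/ x = v1 k \/ x = v2 k).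
Proof.
move=> S subS SX [[a b] d].
have gen := contains_all_v_multiples subS (SX _ (or_introl erefl))
  (SX _ (or_intror (or_introl erefl))) (SX _ (or_intror (or_intror erefl))).
have [[Sa _ _] [_ Sb _] [_ _ Sd]] := And3 (gen a) (gen b) (gen d).
have [_ SD _ _] := subS.
have -> : (a, b, d) = (a, 0, 0) + (0, b, 0) + (0, 0, d) :> Onsager k
  by triple_ring.
exact: SD _ _ (SD _ _ Sa Sb) Sd.
Qed.

Lemma Opmul_centroid (p : {poly k}) : in_centroid (Opmul p).
Proof.
split.
- by move=> [[? ?] ?] [[? ?] ?]; triple_ring.
- by move=> c [[? ?] ?]; triple_ring.
- by move=> [[? ?] ?] [[? ?] ?]; triple_ring.
Qed.

Section Centroid.
Variable f : Onsager k -> Onsager k.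
Hypothesis f_centroid : in_centroid f.

Lemma centroid0 : f 0 = 0.
Proof.
have [fD _ _] := f_centroid.
by apply: (@addrI _ (f 0)); rewrite -fD !addr0.
Qed.

Lemma centroidN x : f (- x) = - f x.
Proof. by have [_ fZ _] := f_centroid; rewrite -scaleN1r fZ scaleN1r. Qed.

Lemma centroid_Obrl x y : f (Obr x y) = Obr (f x) y.
Proof.
have [_ _ fB] := f_centroid.
by rewrite Obr_anti centroidN fB -Obr_anti.
Qed.

Lemma centroid_Obr_self x : Obr x (f x) = 0.
Proof. by have [_ _ fB] := f_centroid; rewrite -fB Obr_self centroid0. Qed.

End Centroid.

Lemma centroid_eq_subalgebra (f g : Onsager k -> Onsager k) :
  in_centroid f -> in_centroid g -> is_subalgebra (fun x => f x = g x).
Proof.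
move=> f_centroid g_centroid.
have [fD fZ fB] := f_centroid; have [gD gZ gB] := g_centroid.
split.
- by rewrite (centroid0 f_centroid) (centroid0 g_centroid).
- by move=> x y fgx fgy; rewrite fD gD fgx fgy.
- by move=> c x fgx; rewrite fZ gZ fgx.
- by move=> x y _ fgy; rewrite fB gB fgy.
Qed.

Lemma mulf_eq0_neq0l (c p : {poly k}) : c != 0 -> c * p = 0 -> p = 0.
Proof. by move=> c_neq0 /eqP; rewrite mulf_eq0 (negbTE c_neq0) => /eqP. Qed.

Lemma opp_eq0 (p : {poly k}) : - p = 0 -> p = 0.
Proof. by move=> /eqP; rewrite oppr_eq0 => /eqP. Qed.

Ltac simpl_Obr_v :=
  rewrite /= !(mul0r, mul1r, subr0, sub0r, mulrN, mulNr, opprK).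

Lemma centralizer_v0 y : Obr (v0 k) y = 0 -> y = Opmul y.1.1 (v0 k).
Proof.
case: y => [[b0 b1] b2] []; simpl_Obr_v.
move=> _ /opp_eq0/(mulf_eq0_neq0l polyX_neq0)->.
move=> /opp_eq0/(mulf_eq0_neq0l polyXsub1_neq0)->.
by triple_ring.
Qed.

Lemma centralizer_v1 y : Obr (v1 k) y = 0 -> y = Opmul y.1.2 (v1 k).
Proof.
case: y => [[b0 b1] b2] []; simpl_Obr_v.
move=> /opp_eq0-> _ /(mulf_eq0_neq0l polyXsub1_neq0)->.
by triple_ring.
Qed.

Lemma centralizer_v2 y : Obr (v2 k) y = 0 -> y = Opmul y.2 (v2 k).
Proof.
case: y => [[b0 b1] b2] []; simpl_Obr_v.
move=> -> /(mulf_eq0_neq0l polyX_neq0)-> _.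
by triple_ring.
Qed.

Lemma centroid_is_Opmul (f : Onsager k -> Onsager k) :
  in_centroid f -> exists! p : {poly k}, forall x, f x = Opmul p x.
Proof.
move=> f_centroid; have [_ _ fB] := f_centroid.
set p := (f (v0 k)).1.1.
have fv0 : f (v0 k) = Opmul p (v0 k)
  by apply/centralizer_v0/centroid_Obr_self.
have fv1 := centralizer_v1 (centroid_Obr_self f_centroid (v1 k)).
have fv2 := centralizer_v2 (centroid_Obr_self f_centroid (v2 k)).
have v0E : v0 k = Obr (v2 k) (v1 k) by triple_ring.
have fv0_by_v1 : f (v0 k) = Opmul (f (v1 k)).1.2 (v0 k).
  have [_ _ mB] := Opmul_centroid (f (v1 k)).1.2.
  by rewrite {1}v0E fB {1}fv1 -mB -v0E.
have fv0_by_v2 : f (v0 k) = Opmul (f (v2 k)).2 (v0 k).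
  rewrite {1}v0E (centroid_Obrl f_centroid) {1}fv2.
  by rewrite -(centroid_Obrl (Opmul_centroid _)) -v0E.
have p_v1 : (f (v1 k)).1.2 = p by rewrite /p fv0_by_v1 /= mulr1.
have p_v2 : (f (v2 k)).2 = p by rewrite /p fv0_by_v2 /= mulr1.
have f_Opmul : forall x, f x = Opmul p x.
  apply: generates_v012
    (centroid_eq_subalgebra f_centroid (Opmul_centroid p)) _.
  by move=> x [|[|]] ->; [exact: fv0 | rewrite -p_v1 | rewrite -p_v2].
exists p; split=> // q fq.
by have := fq (v0 k); rewrite f_Opmul /Opmul /= !mulr1 => -[].
Qed.

Lemma ideal_meets_v2 (I : Onsager k -> Prop) a :
  is_ideal I -> I a -> a <> 0 -> exists2 r, r != 0 & I (0, 0, r).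
Proof.
case=> _ _ _ IB; case: a => [[a0 a1] a2] Ia a_neq0.
have [a2_eq0|a2_neq0] := eqVneq a2 0; last first.
  exists (- (('X - 1) * 'X * a2)).
    by rewrite oppr_eq0 !mulf_neq0 ?polyXsub1_neq0 ?polyX_neq0.
  have -> : (0, 0, - (('X - 1) * 'X * a2)) =
      Obr (v1 k) (Obr (v2 k) (Obr (v0 k) (a0, a1, a2))) by triple_ring.
  exact/IB/IB/IB.
have [a1_eq0|a1_neq0] := eqVneq a1 0.
  have a0_neq0 : a0 != 0.
    by apply/eqP => a0_eq0; apply: a_neq0; rewrite a0_eq0 a1_eq0 a2_eq0.
  exists (('X - 1) * a0); first by rewrite mulf_neq0 ?polyXsub1_neq0.
  have -> : (0, 0, ('X - 1) * a0) = Obr (v1 k) (a0, a1, a2)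
    by rewrite a1_eq0 a2_eq0; triple_ring.
  exact: IB.
exists (- (('X - 1) * a1)); first by rewrite oppr_eq0 mulf_neq0 ?polyXsub1_neq0.
have -> : (0, 0, - (('X - 1) * a1)) = Obr (v0 k) (a0, a1, a2)
  by rewrite a2_eq0; triple_ring.
exact: IB.
Qed.

Lemma Onsager_prime : is_prime k.
Proof.
move=> I J idI idJ [a [Ia a_neq0]] [b [Jb b_neq0]].
have [r r_neq0 Ir] := ideal_meets_v2 idI Ia a_neq0.
have [s s_neq0 Js] := ideal_meets_v2 idJ Jb b_neq0.
have [_ _ _ IB] := idI.
exists (Obr (v0 k) (0, 0, r)), (0, 0, s); split=> //; first exact: IB.
have -> : Obr (Obr (v0 k) (0, 0, r)) (0, 0, s) = ('X * r * s, 0, 0)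
  by triple_ring.
move=> /(congr1 (fun x => x.1.1)) /= /eqP; apply/negP.
by rewrite !mulf_neq0 ?polyX_neq0.
Qed.

End Onsager.

Theorem lemma4p5 (k : fieldType) (hk : 2 \notin [pchar k]) :
  [/\ generates (fun x : Onsager k => x = v0 k \/ x = v1 k \/ x = v2 k),
      (* centroid = { multiplication by p(t) : p in k[t] }, with p unique *)
      ((forall p : {poly k}, in_centroid (Opmul p)) /\
       (forall f, in_centroid f ->
          exists! p : {poly k}, forall x, f x = Opmul p x))
    & is_prime k].
Proof.
split; first exact: generates_v012.
  by split; [exact: Opmul_centroid | exact: centroid_is_Opmul].
exact: Onsager_prime.
Qed.
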